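(* Consider the click-through auction setting with two bidders with equal values $v_1=v_2=v\ge 0$, and let $0\le l<h\le 1$. Suppose the CTR vector equals $(l,h)$ with probability $1/2$ and $(h,l)$ with probability $1/2$. Then for every $\varepsilon>0$ there is a calibrated, correlated information structure (with finitely many signals) whose revenue is at least $vh-\varepsilon$.
   Context: Setting. Bidder $i$ has known value per click $v_i$. The CTR vector $r=(r_1,r_2)\in[0,1]^2$ is drawn from a prior $G$ with finite support. An information structure is a probability distribution with finite support on pairs $(r,s)\in[0,1]^2\times[0,1]^2$ whose $r$-marginal is $G$. Given signals $s$, the winner $i^*$ maximizes $v_is_i$ (uniform tie-breaking), pays per click $p_{i^*}=\max_{j\ne i^*}v_js_j/s_{i^*}$ (revenue $0$ if $s_{i^*}=0$), only upon a click, which occurs with probability $r_{i^*}$; revenue is $\mathbb{E}[r_{i^*}p_{i^*}]$. Calibrated: $\mathbb{E}[r_i\mid s_i=t]=t$ for every $i$ and every $t$ with $\Pr[s_i=t]>0$. Correlated: not independent, where independent means $\mathbb{E}[r_i\mid s]=\mathbb{E}[r_i\mid s_i]$ for all $i$ and all $s$ in the support. *)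

From Stdlib Require Import Reals List Lra Bool.
Import ListNotations.
Open Scope R_scope.
Open Scope bool_scope.

Inductive bidder := B1 | B2.

Record atom := mkAtom { w : R; r1 : R; r2 : R; s1 : R; s2 : R }.

(* A finitely supported information structure: a finite list of atoms
   (repeated (r,s) pairs simply add up their weights). *)
Definition infostruct := list atom.

Definition r_of (i : bidder) (a : atom) : R := match i with B1 => r1 a | B2 => r2 a end.
Definition s_of (i : bidder) (a : atom) : R := match i with B1 => s1 a | B2 => s2 a end.

Definition req (x y : R) : bool := if Req_EM_T x y then true else false.

Definition in01 (x : R) : Prop := 0 <= x <= 1.

Definition esum (I : infostruct) (P : atom -> bool) (f : atom -> R) : R :=
  fold_right Rplus 0 (map (fun a => if P a then w a * f a else 0) I).

Definition prob (I : infostruct) (P : atom -> bool) : R := esum I P (fun _ => 1).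

(* A prior on CTR vectors: finite list of (probability, (r1, r2)). *)
Definition prior := list (R * (R * R)).

Definition prior_mass (G : prior) (a b : R) : R :=
  fold_right Rplus 0 (map (fun p => if req (fst (snd p)) a && req (snd (snd p)) b
                                    then fst p else 0) G).

Definition is_infostruct (G : prior) (I : infostruct) : Prop :=
  (forall a, In a I -> 0 < w a /\ in01 (r1 a) /\ in01 (r2 a) /\ in01 (s1 a) /\ in01 (s2 a)) /\
  esum I (fun _ => true) (fun _ => 1) = 1 /\
  (forall x y : R, prob I (fun a => req (r1 a) x && req (r2 a) y) = prior_mass G x y).

Definition calibrated (I : infostruct) : Prop :=
  forall (i : bidder) (t : R),
    prob I (fun a => req (s_of i a) t) > 0 ->
    esum I (fun a => req (s_of i a) t) (r_of i) / prob I (fun a => req (s_of i a) t) = t.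

Definition independent (I : infostruct) : Prop :=
  forall (i : bidder) (x y : R),
    let Ps := fun a => req (s1 a) x && req (s2 a) y in
    let t := s_of i (mkAtom 0 0 0 x y) in
    let Pi := fun a => req (s_of i a) t in
    prob I Ps > 0 ->
    esum I Ps (r_of i) / prob I Ps = esum I Pi (r_of i) / prob I Pi.

Definition correlated (I : infostruct) : Prop := ~ independent I.

(* Per-click payment of bidder 1 (resp. 2) when winning; revenue 0 if its signal is 0. *)
Definition rev_if_win1 (v1 v2 : R) (a : atom) : R :=
  if req (s1 a) 0 then 0 else r1 a * (v2 * s2 a / s1 a).
Definition rev_if_win2 (v1 v2 : R) (a : atom) : R :=
  if req (s2 a) 0 then 0 else r2 a * (v1 * s1 a / s2 a).

(* Expected revenue from atom a, with uniform tie-breaking. *)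
Definition atom_revenue (v1 v2 : R) (a : atom) : R :=
  if Rlt_dec (v2 * s2 a) (v1 * s1 a) then rev_if_win1 v1 v2 a
  else if Rlt_dec (v1 * s1 a) (v2 * s2 a) then rev_if_win2 v1 v2 a
  else (rev_if_win1 v1 v2 a + rev_if_win2 v1 v2 a) / 2.

Definition revenue (v1 v2 : R) (I : infostruct) : R :=
  esum I (fun _ => true) (atom_revenue v1 v2).

Definition swap_prior (l h : R) : prior := [(1/2, (l, h)); (1/2, (h, l))].

From Pilot Require Import Defs.
From Stdlib Require Import Reals List Lra Lia.
Open Scope R_scope.

(* We use a "ladder" information structure.  Fix signal levels
   l = t_0 < t_1 < ... < t_(m+1) = h and pair weights c_0, ..., c_m summing
   to 1/2.  For each j <= m there are two atoms of weight c_j: the up atom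
   with CTRs (l, h) and signals (t_j, t_(j+1)), and its mirror image, the down
   atom with CTRs (h, l) and signals (t_(j+1), t_j).  A bidder observing t_j
   is either in up atom j (true CTR l) or in down atom j-1 (true CTR h), so the
   structure is calibrated as soon as the balance condition
       c_j (h - t_(j+1)) = c_(j+1) (t_(j+1) - l)
   holds; it is correlated because the signal pair (t_1, t_2) reveals CTR l.
   In every atom the high-CTR bidder wins and pays v * t_j / t_(j+1) per click,
   so the revenue is v h sum_j 2 c_j t_j / t_(j+1).  Choosing equally spaced
   levels t_j = l + (h - l) j / (m+1) and binomial weights c_j = C(m,j) / 2^(m+1)
   satisfies the balance condition, and since t_j / t_(j+1) >= 1 - 1/(j+1) the
   revenue loss is at most v h sum_j C(m,j) / ((j+1) 2^m) <= 2 v / (m+1). *)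

Lemma req_true x y : req x y = true <-> x = y.
Proof. unfold req; destruct (Req_EM_T x y); split; congruence. Qed.

Lemma req_refl x : req x x = true.
Proof. exact (proj2 (req_true x x) eq_refl). Qed.

Lemma esum_app I1 I2 P F : esum (I1 ++ I2) P F = esum I1 P F + esum I2 P F.
Proof. unfold esum; rewrite map_app; induction I1 as [|a I1 IH]; simpl; lra. Qed.

Lemma esum_seq (g : nat -> atom) (m : nat) P F :
  esum (map g (seq 0 (S m))) P F =
  sum_f_R0 (fun k => if P (g k) then w (g k) * F (g k) else 0) m.
Proof.
  induction m as [|m IH].
  - unfold esum; simpl; lra.
  - rewrite seq_S, map_app, esum_app, IH, tech5. unfold esum; simpl; lra.
Qed.

Lemma esum_minus I P f g : esum I P (fun a => f a - g a) = esum I P f - esum I P g.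
Proof. unfold esum; induction I as [|a I IH]; simpl; [lra|]. destruct (P a); lra. Qed.

Lemma esum_const_on I P f c : (forall a, In a I -> P a = true -> f a = c) ->
  esum I P f = c * prob I P.
Proof.
  unfold prob, esum; induction I as [|a I IH]; simpl; intros H; [lra|].
  rewrite IH by auto. destruct (P a) eqn:E; [rewrite (H a) by auto|]; lra.
Qed.

Lemma prob_nonneg I P : (forall b, In b I -> 0 < w b) -> 0 <= prob I P.
Proof.
  unfold prob, esum; induction I as [|c I IH]; simpl; intros H; [lra|].
  assert (0 < w c) by auto. assert (0 <= fold_right Rplus 0
    (map (fun b => if P b then w b * 1 else 0) I)) by auto.
  destruct (P c); lra.
Qed.

Lemma prob_ge I P a : (forall b, In b I -> 0 < w b) -> In a I -> P a = true ->
  w a <= prob I P.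
Proof.
  induction I as [|c I IH]; simpl; intros H Hin HP; [contradiction|].
  assert (0 <= prob I P) by (apply prob_nonneg; auto).
  assert (0 < w c) by auto.
  unfold prob, esum in *; simpl.
  destruct Hin as [<-|Hin].
  - rewrite HP; lra.
  - assert (w a <= fold_right Rplus 0 (map (fun b => if P b then w b * 1 else 0) I)) by auto.
    destruct (P c); lra.
Qed.

(* Reindexing: if a_j = u_(j+1) for j < m, a_m = 0 and u_0 = 0, the two
   sums over 0..m coincide.  This telescoping drives calibration. *)
Lemma sum_f_R0_shift (a u : nat -> R) (m : nat) :
  u O = 0 -> a m = 0 -> (forall j, (j < m)%nat -> a j = u (S j)) ->
  sum_f_R0 a m = sum_f_R0 u m.
Proof.
  intros Hu Ha Hau. destruct m as [|m]; [simpl; lra|].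
  rewrite tech5, Ha, (decomp_sum u (S m)) by lia. simpl pred.
  rewrite Hu, (sum_eq a (fun j => u (S j))) by (intros; apply Hau; lia). lra.
Qed.

Lemma sum_f_R0_scal (x : R) (a : nat -> R) (m : nat) :
  sum_f_R0 (fun j => x * a j) m = x * sum_f_R0 a m.
Proof. rewrite scal_sum; apply sum_eq; intros; ring. Qed.

(* With equal values, the bidder with the higher signal y wins and pays
   v x / y per click; the click happens with that bidder's CTR rh. *)
Lemma atom_revenue_ordered v p x y rl rh : 0 <= v -> 0 <= x -> x < y ->
  atom_revenue v v (mkAtom p rl rh x y) = v * rh * (x / y) /\
  atom_revenue v v (mkAtom p rh rl y x) = v * rh * (x / y).
Proof.
  intros Hv Hx Hxy.
  unfold atom_revenue, rev_if_win1, rev_if_win2, req; cbn [s1 s2 r1 r2].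
  destruct (Req_EM_T y 0) as [Hy|Hy]; [lra|].
  destruct (Req_EM_T v 0) as [->|Hv0].
  - split; repeat destruct (Rlt_dec _ _); repeat destruct (Req_EM_T _ _); unfold Rdiv; ring.
  - split.
    + destruct (Rlt_dec (v * y) (v * x)); [nra|].
      destruct (Rlt_dec (v * x) (v * y)); [field; lra|nra].
    + destruct (Rlt_dec (v * x) (v * y)); [field; lra|nra].
Qed.

Section Ladder.
Variables (m : nat) (l h : R) (t c : nat -> R).

Definition up_atom (j : nat) : atom := mkAtom (c j) l h (t j) (t (S j)).
Definition down_atom (j : nat) : atom := mkAtom (c j) h l (t (S j)) (t j).
Definition ladder : infostruct :=
  map up_atom (seq 0 (S m)) ++ map down_atom (seq 0 (S m)).

Lemma in_ladder a : In a ladder ->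
  exists j, (j <= m)%nat /\ (a = up_atom j \/ a = down_atom j).
Proof.
  unfold ladder; rewrite in_app_iff, !in_map_iff.
  intros [[j [<- Hj]]|[j [<- Hj]]]; apply in_seq in Hj; exists j; split; auto; lia.
Qed.

Hypothesis weight_pos : forall j, (j <= m)%nat -> 0 < c j.

Lemma ladder_weight_pos a : In a ladder -> 0 < w a.
Proof. intros (j & Hj & [-> | ->])%in_ladder; apply weight_pos; auto. Qed.

Lemma ladder_is_infostruct :
  in01 l -> in01 h -> (forall j, (j <= S m)%nat -> in01 (t j)) ->
  sum_f_R0 c m = 1 / 2 ->
  is_infostruct (swap_prior l h) ladder.
Proof.
  intros Hl Hh Ht Hc. split; [|split].
  - intros a Ha. split; [apply ladder_weight_pos; auto|].
    destruct (in_ladder a Ha) as (j & Hj & [-> | ->]); cbn;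
      pose proof (Ht j ltac:(lia)); pose proof (Ht (S j) ltac:(lia)); tauto.
  - unfold ladder; rewrite esum_app, !esum_seq; cbn.
    rewrite !(sum_eq _ c) by (intros; ring). lra.
  - intros x y. unfold prob, ladder, prior_mass, swap_prior.
    rewrite esum_app, !esum_seq; cbn.
    assert (Hhalf : forall b : bool,
      sum_f_R0 (fun k => if b then c k * 1 else 0) m = if b then 1 / 2 else 0).
    { intros [|]; cbn.
      - rewrite <- Hc; apply sum_eq; intros; ring.
      - rewrite sum_cte; ring. }
    rewrite !Hhalf; ring.
Qed.

Hypotheses (bottom : t O = l) (top : t (S m) = h)
  (balance : forall j, (j < m)%nat -> c j * (h - t (S j)) = c (S j) * (t (S j) - l)).

(* Core of calibration: at any signal value t0, the total deviation
   sum of w (r - s) over atoms with that signal vanishes. *)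
Lemma ladder_balance_sum t0 :
  sum_f_R0 (fun j => if req (t j) t0 then c j * (l - t j) else 0) m +
  sum_f_R0 (fun j => if req (t (S j)) t0 then c j * (h - t (S j)) else 0) m = 0.
Proof.
  set (u := fun j => if req (t j) t0 then c j * (t j - l) else 0).
  rewrite (sum_f_R0_shift (fun j => if req (t (S j)) t0 then c j * (h - t (S j)) else 0) u).
  - rewrite <- sum_plus, (sum_eq _ (fun _ => 0)), sum_cte; [lra|].
    intros j _; unfold u; destruct (req (t j) t0); ring.
  - unfold u; rewrite bottom; destruct (req l t0); ring.
  - cbn beta; rewrite top; destruct (req h t0); ring.
  - intros j Hj; unfold u; rewrite balance by auto; reflexivity.
Qed.

Lemma ladder_calibrated : calibrated ladder.
Proof.
  intros i t0 Hp.
  assert (Hzero : esum ladder (fun a => req (s_of i a) t0) (fun a => r_of i a - s_of i a) = 0).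
  { unfold ladder; rewrite esum_app, !esum_seq.
    pose proof (ladder_balance_sum t0). destruct i; cbn; lra. }
  rewrite esum_minus, (esum_const_on _ _ (s_of i) t0) in Hzero
    by (intros a _ Ha; apply req_true; auto).
  apply (Rmult_eq_reg_r (prob ladder (fun a => req (s_of i a) t0))); [|lra].
  unfold Rdiv; rewrite Rmult_assoc, Rinv_l; lra.
Qed.

Hypothesis increasing : forall j, (j <= m)%nat -> t j < t (S j).

Lemma ladder_above_bottom j : (j <= S m)%nat -> l <= t j.
Proof.
  induction j as [|j IH]; intros Hj; [lra|].
  pose proof (increasing j ltac:(lia)). pose proof (IH ltac:(lia)). lra.
Qed.

(* Given the pair (t_1, t_2) bidder 1 has CTR l, while given only t_1 its
   expected CTR is t_1 > l: the signals are correlated. *)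
Lemma ladder_correlated : (1 <= m)%nat -> correlated ladder.
Proof.
  intros Hm Hind.
  set (Ps := fun a => req (s1 a) (t 1) && req (s2 a) (t 2)).
  set (P1 := fun a => req (s1 a) (t 1)).
  assert (Hin : In (up_atom 1) ladder).
  { apply in_or_app; left; apply in_map, in_seq; lia. }
  assert (Hw : w (up_atom 1) <= prob ladder Ps).
  { apply prob_ge; auto using ladder_weight_pos. unfold Ps; cbn; rewrite !req_refl; auto. }
  assert (Hw1 : w (up_atom 1) <= prob ladder P1).
  { apply prob_ge; auto using ladder_weight_pos. unfold P1; cbn; rewrite !req_refl; auto. }
  pose proof (ladder_weight_pos _ Hin).
  assert (Hjoint : esum ladder Ps (r_of Defs.B1) = l * prob ladder Ps).
  { apply esum_const_on. intros a Ha HP. destruct (in_ladder a Ha) as (j & Hj & [-> | ->]); auto.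
    exfalso. unfold Ps in HP; cbn in HP. apply andb_prop in HP as [H1 H2].
    apply req_true in H1, H2. pose proof (increasing j Hj). pose proof (increasing 1 Hm). lra. }
  assert (Hcal : esum ladder P1 (r_of Defs.B1) / prob ladder P1 = t 1)
    by (apply (ladder_calibrated Defs.B1); change (prob ladder P1 > 0); lra).
  specialize (Hind Defs.B1 (t 1) (t 2) ltac:(fold Ps; lra)).
  change (esum ladder Ps (r_of Defs.B1) / prob ladder Ps =
          esum ladder P1 (r_of Defs.B1) / prob ladder P1) in Hind.
  rewrite Hjoint, Hcal in Hind.
  replace (l * prob ladder Ps / prob ladder Ps) with l in Hind by (field; lra).
  pose proof (increasing 0 ltac:(lia)). lra.
Qed.

Lemma ladder_revenue v : 0 <= v -> 0 <= l ->
  revenue v v ladder = v * h * sum_f_R0 (fun j => 2 * c j * (t j / t (S j))) m.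
Proof.
  intros Hv Hl. unfold revenue, ladder. rewrite esum_app, !esum_seq, <- sum_plus, scal_sum.
  apply sum_eq. intros j Hj.
  assert (Ht : 0 <= t j) by (pose proof (ladder_above_bottom j ltac:(lia)); lra).
  destruct (atom_revenue_ordered v (c j) (t j) (t (S j)) l h Hv Ht (increasing j Hj)) as [E1 E2].
  unfold up_atom, down_atom; cbn [w]; rewrite E1, E2. ring.
Qed.

End Ladder.

Lemma C_pos n p : 0 < C n p.
Proof.
  unfold C; apply Rdiv_lt_0_compat; [|apply Rmult_lt_0_compat]; apply INR_fact_lt_0.
Qed.

Lemma C_row_sum n : sum_f_R0 (C n) n = 2 ^ n.
Proof.
  replace 2 with (1 + 1) by ring. rewrite binomial.
  apply sum_eq; intros; rewrite !pow1; ring.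
Qed.

(* (n - j) C(n,j) = (j+1) C(n,j+1): this is the ladder balance condition. *)
Lemma C_step n j : (j < n)%nat -> INR (n - j) * C n j = INR (S j) * C n (S j).
Proof.
  intros Hj. unfold C. replace (n - j)%nat with (S (n - S j)) by lia.
  rewrite (fact_simpl (n - S j)), (fact_simpl j), !mult_INR.
  pose proof (INR_fact_neq_0 j). pose proof (INR_fact_neq_0 (n - S j)).
  pose proof (not_0_INR (S j) ltac:(discriminate)).
  pose proof (not_0_INR (S (n - S j)) ltac:(discriminate)).
  field; tauto.
Qed.

Lemma C_absorb n j : INR (S j) * C (S n) (S j) = INR (S n) * C n j.
Proof.
  unfold C. rewrite Nat.sub_succ, (fact_simpl n), (fact_simpl j), !mult_INR.
  pose proof (INR_fact_neq_0 j). pose proof (INR_fact_neq_0 (n - j)).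
  pose proof (not_0_INR (S j) ltac:(discriminate)).
  field; tauto.
Qed.

(* sum_j C(n,j)/(j+1) = (2^(n+1) - 1)/(n+1), bounded by 2^(n+1)/(n+1). *)
Lemma C_harmonic_sum n : sum_f_R0 (fun j => C n j / INR (S j)) n <= 2 ^ S n / INR (S n).
Proof.
  pose proof (lt_0_INR (S n) ltac:(lia)).
  rewrite (sum_eq _ (fun j => C (S n) (S j) / INR (S n))).
  2:{ intros j _. pose proof (C_absorb n j). pose proof (lt_0_INR (S j) ltac:(lia)).
      apply (Rmult_eq_reg_r (INR (S j) * INR (S n))); [|nra].
      field_simplify; [nra|lra|lra]. }
  rewrite <- (C_row_sum (S n)), (decomp_sum _ (S n)) by lia. simpl pred.
  unfold Rdiv. rewrite <- scal_sum, Rmult_comm.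
  apply Rmult_le_compat_r; [apply Rlt_le, Rinv_0_lt_compat; lra|].
  pose proof (C_pos (S n) 0). lra.
Qed.

Section BinomialLadder.
Variables (m : nat) (l h : R).
Hypotheses (l_nonneg : 0 <= l) (l_lt_h : l < h) (h_le_1 : h <= 1).

Definition binom_signal (j : nat) : R := l + (h - l) * (INR j / INR (S m)).
Definition binom_weight (j : nat) : R := C m j / 2 ^ S m.
Definition binom_ladder : infostruct := ladder m l h binom_signal binom_weight.

Let m_pos : 0 < INR m + 1.
Proof. pose proof (pos_INR m); lra. Qed.

Lemma binom_weight_pos j : 0 < binom_weight j.
Proof. apply Rdiv_lt_0_compat; [apply C_pos | apply pow_lt; lra]. Qed.

Lemma binom_weight_sum : sum_f_R0 binom_weight m = 1 / 2.
Proof.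
  unfold binom_weight, Rdiv. rewrite <- scal_sum, C_row_sum, <- tech_pow_Rmult.
  field. apply pow_nonzero, Rgt_not_eq; lra.
Qed.

Lemma binom_signal_bottom : binom_signal O = l.
Proof. unfold binom_signal, Rdiv; rewrite INR_0; ring. Qed.

Lemma binom_signal_top : binom_signal (S m) = h.
Proof. unfold binom_signal; rewrite !S_INR; field; lra. Qed.

Lemma binom_signal_step j : binom_signal (S j) - binom_signal j = (h - l) / INR (S m).
Proof. unfold binom_signal; rewrite !S_INR; field; lra. Qed.

Lemma binom_signal_increasing j : binom_signal j < binom_signal (S j).
Proof.
  pose proof (binom_signal_step j). rewrite S_INR in *.
  assert (0 < (h - l) / (INR m + 1)) by (apply Rdiv_lt_0_compat; lra). lra.
Qed.

Lemma binom_signal_range j : (j <= S m)%nat -> in01 (binom_signal j).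
Proof.
  intros Hj. apply le_INR in Hj. pose proof (pos_INR j).
  unfold in01, binom_signal. rewrite S_INR in *.
  assert (0 <= INR j / (INR m + 1) <= 1).
  { split; [apply Rmult_le_pos; [lra | apply Rlt_le, Rinv_0_lt_compat; lra]|].
    apply (Rmult_le_reg_r (INR m + 1)); [lra|]. field_simplify; lra. }
  nra.
Qed.

Lemma binom_balance j : (j < m)%nat ->
  binom_weight j * (h - binom_signal (S j)) =
  binom_weight (S j) * (binom_signal (S j) - l).
Proof.
  intros Hj. pose proof (C_step m j Hj) as Hstep. rewrite minus_INR in Hstep by lia.
  assert (Hpow : 2 ^ S m <> 0) by (apply pow_nonzero, Rgt_not_eq; lra).
  assert (Hm : INR m + 1 <> 0) by lra.
  set (k := (h - l) / (2 ^ S m * (INR m + 1))).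
  unfold binom_weight, binom_signal. rewrite !S_INR in *.
  transitivity (k * ((INR m - INR j) * C m j)); [unfold k; field; tauto|].
  rewrite Hstep. unfold k; field; tauto.
Qed.

(* Each pair loses at most a fraction 1/(j+1) of its revenue; uses l >= 0. *)
Lemma binom_signal_ratio j : 1 - 1 / INR (S j) <= binom_signal j / binom_signal (S j).
Proof.
  set (d := (h - l) / INR (S m)).
  assert (Hd : 0 < d) by (unfold d; rewrite S_INR; apply Rdiv_lt_0_compat; lra).
  assert (Htj : binom_signal j = l + d * INR j) by (unfold binom_signal, d; field; rewrite S_INR; lra).
  pose proof (binom_signal_step j) as Hstep; fold d in Hstep.
  pose proof (pos_INR j).
  assert (Htj1 : binom_signal (S j) = l + d * (INR j + 1)) by lra.
  rewrite Htj, Htj1, S_INR.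
  assert (Hgap : (l + d * INR j) / (l + d * (INR j + 1)) - (1 - 1 / (INR j + 1)) =
                 l / ((INR j + 1) * (l + d * (INR j + 1)))) by (field; split; nra).
  assert (0 <= l / ((INR j + 1) * (l + d * (INR j + 1)))).
  { apply Rmult_le_pos; [lra | apply Rlt_le, Rinv_0_lt_compat; nra]. }
  lra.
Qed.

(* Averaging the losses with binomial weights: the total loss fraction is
   at most 2/(m+1). *)
Lemma binom_ladder_efficiency :
  1 - 2 / INR (S m) <=
  sum_f_R0 (fun j => 2 * binom_weight j * (binom_signal j / binom_signal (S j))) m.
Proof.
  assert (Hpow : 0 < 2 ^ S m) by (apply pow_lt; lra).
  set (k := 2 / 2 ^ S m).
  apply Rle_trans with (sum_f_R0 (fun j => 2 * binom_weight j - k * (C m j / INR (S j))) m).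
  - rewrite minus_sum, !sum_f_R0_scal, binom_weight_sum.
    pose proof (C_harmonic_sum m) as Hharm.
    assert (k * sum_f_R0 (fun j => C m j / INR (S j)) m <= 2 / INR (S m)).
    { apply Rle_trans with (k * (2 ^ S m / INR (S m))).
      - apply Rmult_le_compat_l; [unfold k; apply Rlt_le, Rdiv_lt_0_compat; lra | exact Hharm].
      - unfold k; right; field; rewrite S_INR; lra. }
    lra.
  - apply sum_Rle. intros j _.
    pose proof (binom_signal_ratio j). pose proof (binom_weight_pos j).
    replace (2 * binom_weight j - k * (C m j / INR (S j)))
      with (2 * binom_weight j * (1 - 1 / INR (S j)))
      by (unfold k, binom_weight; field; rewrite S_INR; pose proof (pos_INR j); lra).
    apply Rmult_le_compat_l; lra.
Qed.

Lemma binom_ladder_revenue v : 0 <= v ->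
  revenue v v binom_ladder >= v * h - 2 * v / INR (S m).
Proof.
  intros Hv. unfold binom_ladder.
  rewrite ladder_revenue by auto using binom_signal_bottom, binom_signal_increasing.
  pose proof binom_ladder_efficiency as Heff.
  assert (Hx : 0 <= 2 / INR (S m)) by (rewrite S_INR; apply Rlt_le, Rdiv_lt_0_compat; lra).
  assert (Hvh : 0 <= v * h <= v) by (split; nra).
  set (x := 2 / INR (S m)) in *.
  replace (2 * v / INR (S m)) with (v * x) by (unfold x, Rdiv; ring).
  apply Rle_ge. apply Rle_trans with (v * h * (1 - x)); [nra|].
  apply Rmult_le_compat_l; lra.
Qed.

End BinomialLadder.

(* Taking m large enough that 2 v / (m+1) <= eps gives the theorem. *)
Theorem mainTheorem4 (v l h : R) :
  0 <= v -> 0 <= l -> l < h -> h <= 1 ->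
  forall eps : R, eps > 0 ->
  exists I : infostruct,
    is_infostruct (swap_prior l h) I /\ calibrated I /\ correlated I /\
    revenue v v I >= v * h - eps.
Proof.
  intros Hv Hl Hlh Hh eps Heps.
  destruct (INR_unbounded (2 * v / eps)) as [k Hk].
  set (m := S k).
  assert (Hsmall : 2 * v / INR (S m) <= eps).
  { assert (Hkm : INR k <= INR (S m)) by (apply le_INR; unfold m; lia).
    assert (2 * v / eps * eps = 2 * v) by (field; lra).
    assert (0 < INR (S m)) by (apply lt_0_INR; lia).
    apply (Rmult_le_reg_r (INR (S m))); [lra|].
    unfold Rdiv at 1; rewrite Rmult_assoc, Rinv_l by lra. nra. }
  exists (binom_ladder m l h). unfold binom_ladder. split; [|split; [|split]].
  - apply ladder_is_infostruct; auto using binom_weight_pos, binom_weight_sum, binom_signal_range;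
      unfold in01; lra.
  - apply ladder_calibrated;
      auto using binom_signal_bottom, binom_signal_top, binom_balance.
  - apply ladder_correlated; auto using binom_weight_pos, binom_signal_bottom,
      binom_signal_top, binom_balance, binom_signal_increasing; unfold m; lia.
  - pose proof (binom_ladder_revenue m l h Hl Hlh Hh v Hv). unfold binom_ladder in *. lra.
Qed.
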